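(* Let $(\bm u^{\mathrm d}(t),\bm y^{\mathrm d}(t))_{t=0}^{T-1}$, with $T>1$, be data points each belonging to $\mathscr{B}_{\mathrm{DF}}$, and let $H\doteq\begin{bmatrix}\bm u^{\mathrm d}(0) & \cdots & \bm u^{\mathrm d}(T-1)\\ \bm y^{\mathrm d}(0) & \cdots & \bm y^{\mathrm d}(T-1)\end{bmatrix}\in\mathbb{R}^{(6n+1)\times T}$. Assume $\operatorname{rank} H = 3n+1$. Then a point $(u,y)\in\mathbb{R}^{2n}\times\mathbb{R}^{4n+1}$ with $u=(p,q)$ and $y=(P,Q,\ell,\mathsf v,\mathsf v_0)$ belongs to $\mathscr{B}_{\mathrm{DF}}$ if and only if there exists $g\in\mathbb{R}^{T}$ such that $\begin{bmatrix}u\\ y\end{bmatrix}=Hg$ and $\mathsf v\odot\ell=P\odot P+Q\odot Q$, where $\odot$ denotes the element-wise product.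
   Context: Network: a tree with nodes $\mathcal N=\{0,1,\dots,n\}$ rooted at the slack node $0$; $\mathcal N_+=\{1,\dots,n\}$. Each $i\in\mathcal N_+$ has a unique parent $\pi(i)\in\mathcal N$, and the edge $(i,\pi(i))$ carries resistance $\mathtt r_i\ge 0$ and reactance $\mathtt x_i\ge0$ with $\mathtt r_i^2+\mathtt x_i^2\neq 0$. Variables: nodal net injections $p,q\in\mathbb{R}^n$, branch flows $P,Q\in\mathbb{R}^n$, squared branch currents $\ell\in\mathbb{R}^n$, squared voltage magnitudes $\mathsf v\in\mathbb{R}^n$ at nodes of $\mathcal N_+$, and slack squared voltage $\mathsf v_0\in\mathbb{R}$ (all vectors indexed by $\mathcal N_+$). The DistFlow equations are, for every $i\in\mathcal N_+$ with $j=\pi(i)$: (1) $P_i=p_i+\sum_{k:\pi(k)=i}(P_k-\mathtt r_k\ell_k)$; (2) $Q_i=q_i+\sum_{k:\pi(k)=i}(Q_k-\mathtt x_k\ell_k)$; (3) $\mathsf v_j=\mathsf v_i-2(\mathtt r_iP_i+\mathtt x_iQ_i)+(\mathtt r_i^2+\mathtt x_i^2)\ell_i$ (with $\mathsf v_j=\mathsf v_0$ when $j=0$); (4) $\ell_i\mathsf v_i=P_i^2+Q_i^2$. Input $u=(p,q)\in\mathbb{R}^{2n}$, output $y=(P,Q,\ell,\mathsf v,\mathsf v_0)\in\mathbb{R}^{4n+1}$ (vertical stacking in this order). $\mathscr{B}_{\mathrm{DF}}\subset\mathbb{R}^{2n}\times\mathbb{R}^{4n+1}$ is the set of all $(u,y)$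 satisfying (1)–(4). *)

From mathcomp Require Import all_boot all_order all_algebra.
From mathcomp Require Import reals.
Set Implicit Arguments. Unset Strict Implicit. Unset Printing Implicit Defensive.
Import Order.TTheory GRing.Theory Num.Theory.
Local Open Scope ring_scope.

(* Nodes of N_+ = {1..n} are represented by 'I_n; the slack node 0 by None.
   parent i = Some j  means  pi(i) = j in N_+,  parent i = None means pi(i) = 0. *)

Definition is_tree (n : nat) (parent : 'I_n -> option 'I_n) : Prop :=
  forall i : 'I_n, exists k : nat, iter k (fun o => obind parent o) (Some i) = None.

Section Layout.
Context {R : realType} {n : nat}.
Definition p_of (u : 'cV[R]_(n + n)) : 'cV[R]_n := usubmx u.
Definition q_of (u : 'cV[R]_(n + n)) : 'cV[R]_n := dsubmx u.
Definition P_of (y : 'cV[R]_(n + (n + (n + (n + 1))))) : 'cV[R]_n := usubmx y.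
Definition Q_of (y : 'cV[R]_(n + (n + (n + (n + 1))))) : 'cV[R]_n :=
  usubmx (dsubmx y).
Definition l_of (y : 'cV[R]_(n + (n + (n + (n + 1))))) : 'cV[R]_n :=
  usubmx (dsubmx (dsubmx y)).
Definition v_of (y : 'cV[R]_(n + (n + (n + (n + 1))))) : 'cV[R]_n :=
  usubmx (dsubmx (dsubmx (dsubmx y))).
Definition v0_of (y : 'cV[R]_(n + (n + (n + (n + 1))))) : R :=
  (dsubmx (dsubmx (dsubmx (dsubmx y)))) ord0 ord0.
End Layout.

Definition hadamard {R : realType} {m k : nat} (A B : 'M[R]_(m, k)) : 'M[R]_(m, k) :=
  \matrix_(i, j) (A i j * B i j).

Definition in_BDF {R : realType} {n : nat} (parent : 'I_n -> option 'I_n)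
  (r x : 'I_n -> R) (u : 'cV[R]_(n + n)) (y : 'cV[R]_(n + (n + (n + (n + 1))))) : Prop :=
  let p := p_of u in let q := q_of u in
  let P := P_of y in let Q := Q_of y in let l := l_of y in
  let v := v_of y in let v0 := v0_of y in
  forall i : 'I_n,
    [/\ P i ord0 = p i ord0 + \sum_(k : 'I_n | parent k == Some i) (P k ord0 - r k * l k ord0),
        Q i ord0 = q i ord0 + \sum_(k : 'I_n | parent k == Some i) (Q k ord0 - x k * l k ord0),
        (match parent i with Some j => v j ord0 | None => v0 end)
          = v i ord0 - 2 * (r i * P i ord0 + x i * Q i ord0) + (r i ^+ 2 + x i ^+ 2) * l i ord0
      & l i ord0 * v i ord0 = P i ord0 ^+ 2 + Q i ord0 ^+ 2].

Definition data_matrix {R : realType} {n T : nat}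
  (ud : 'I_T -> 'cV[R]_(n + n)) (yd : 'I_T -> 'cV[R]_(n + (n + (n + (n + 1))))) :
  'M[R]_(n + n + (n + (n + (n + (n + 1)))), T) :=
  \matrix_(i, t) (col_mx (ud t) (yd t)) i ord0.

From mathcomp Require Import all_boot all_order all_algebra.
From mathcomp Require Import reals ring zify.
Import Order.TTheory GRing.Theory Num.Theory.
Local Open Scope ring_scope.

(* The equations (1)-(3) are linear, so they cut out a subspace S of R^(6n+1)
   containing every data column. On S the projection onto the coordinates
   (P, Q, l, v0) is injective: (1) and (2) recover p and q, and (3), read from
   the root down the tree, recovers v. Hence dim S <= 3n+1 = rank H, so S is the
   column space of H, and the quadratic equation (4) is all that is left. *)

Section ColumnSpace.

Context {F : fieldType} {m k T : nat} {S : 'cV[F]_m -> Prop}.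
Hypotheses (S0 : S 0) (S_lin : forall a c d, S c -> S d -> S (a *: c + d)).
Context {proj : 'M[F]_(k, m)}.
Hypothesis proj_inj : forall c, S c -> proj *m c = 0 -> c = 0.
Context {H : 'M[F]_(m, T)}.
Hypothesis S_col : forall t, S (col t H).

Lemma S_mulmx g : S (H *m g).
Proof.
have -> : H *m g = \sum_t g t 0 *: col t H.
  apply/matrixP => i j; rewrite (ord1 j) !mxE summxE.
  by apply: eq_bigr => t _; rewrite !mxE mulrC.
apply: big_ind => [//|c d Sc Sd|t _]; first by rewrite -[c]scale1r; apply: S_lin.
by rewrite -[_ *: _]addr0; apply: S_lin.
Qed.

Lemma S_sub c d : S c -> S d -> S (c - d).
Proof. by move=> Sc Sd; rewrite addrC -scaleN1r; apply: S_lin. Qed.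

Hypothesis rankH : \rank H = k.

Lemma mxrank_proj_mul : \rank (proj *m H) = k.
Proof.
rewrite -mxrank_tr trmx_mul.
have := mxrank_mul_ker H^T proj^T; rewrite mxrank_tr rankH.
suff -> : (H^T :&: kermx proj^T)%MS = 0 by rewrite mxrank0 addn0.
apply/eqP; rewrite -submx0; apply/row_subP => i.
have := row_sub i (H^T :&: kermx proj^T)%MS.
rewrite sub_capmx submx0 => /andP[/submxP[D ->] /sub_kermxP hker].
rewrite -trmx_eq0 trmx_mul trmxK; apply/eqP; apply: proj_inj; first exact: S_mulmx.
by apply/trmx_inj; rewrite !trmx_mul trmxK hker trmx0.
Qed.

Lemma S_in_colspace c : S c -> exists g, c = H *m g.
Proof.
move=> Sc.
have /row_freeP[B hB] : row_free (proj *m H) by rewrite /row_free mxrank_proj_mul.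
exists (B *m (proj *m c)); apply/eqP; rewrite -subr_eq0; apply/eqP; apply: proj_inj.
  by apply: S_sub => //; apply: S_mulmx.
by rewrite mulmxBr !mulmxA hB mul1mx subrr.
Qed.

End ColumnSpace.

Lemma is_tree_const {A : Type} {n} {parent : 'I_n -> option 'I_n}
    (f : 'I_n -> A) (a : A) :
  is_tree parent -> (forall i, f i = oapp f a (parent i)) -> forall i, f i = a.
Proof.
move=> tree f_parent i; have [k] := tree i.
elim: k i => [//|k IHk] i; rewrite iterSr /= f_parent.
by case: (parent i) => [j|//]; apply: IHk.
Qed.

Lemma scale_addmxE (R : pzRingType) m k (a : R) (A B : 'M[R]_(m, k)) i j :
  (a *: A + B) i j = a * A i j + B i j.
Proof. by rewrite !mxE. Qed.

Lemma hadamard_mul_sqrP (R : realType) n (v l P Q : 'cV[R]_n) :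
  hadamard v l = hadamard P P + hadamard Q Q
  <-> forall i, l i 0 * v i 0 = P i 0 ^+ 2 + Q i 0 ^+ 2.
Proof.
split=> [/matrixP eq_had i | eq_sq]; last apply/matrixP => i j; rewrite ?(ord1 j).
  by have := eq_had i 0; rewrite !mxE mulrC !expr2.
by rewrite !mxE mulrC eq_sq !expr2.
Qed.

Section DistFlow.

Context {R : realType} {n : nat} (parent : 'I_n -> option 'I_n) (r x : 'I_n -> R).

Definition distflow_linear (u : 'cV[R]_(n + n)) (y : 'cV[R]_(n + (n + (n + (n + 1))))) :=
  forall i : 'I_n,
    [/\ P_of y i 0 = p_of u i 0
                      + \sum_(k | parent k == Some i) (P_of y k 0 - r k * l_of y k 0),
        Q_of y i 0 = q_of u i 0
                      + \sum_(k | parent k == Some i) (Q_of y k 0 - x k * l_of y k 0)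
      & oapp (fun j => v_of y j 0) (v0_of y) (parent i)
          = v_of y i 0 - 2 * (r i * P_of y i 0 + x i * Q_of y i 0)
            + (r i ^+ 2 + x i ^+ 2) * l_of y i 0].

Lemma in_BDFE u y :
  in_BDF parent r x u y <->
  distflow_linear u y /\
  hadamard (v_of y) (l_of y) = hadamard (P_of y) (P_of y) + hadamard (Q_of y) (Q_of y).
Proof.
split=> [BDF | [lin /hadamard_mul_sqrP sq]].
  by split; [move=> i | apply/hadamard_mul_sqrP => i]; case: (BDF i).
by hnf=> i; case: (lin i) => *; split.
Qed.

Lemma children_sum_scaleD (a : R) (w : 'I_n -> R) (F G L M : 'cV[R]_n) i :
  \sum_(k | parent k == Some i) ((a *: F + G) k 0 - w k * (a *: L + M) k 0)
  = a * \sum_(k | parent k == Some i) (F k 0 - w k * L k 0)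
    + \sum_(k | parent k == Some i) (G k 0 - w k * M k 0).
Proof.
rewrite mulr_sumr -big_split; apply: eq_bigr => k _ /=.
by rewrite !scale_addmxE; ring.
Qed.

Lemma distflow_linearD a u y u' y' :
  distflow_linear u y -> distflow_linear u' y' -> distflow_linear (a *: u + u') (a *: y + y').
Proof.
move=> lin lin' i; have [e1 e2 e3] := lin i; have [e1' e2' e3'] := lin' i.
rewrite /p_of /q_of /P_of /Q_of /l_of /v_of /v0_of !linearP !children_sum_scaleD.
split; rewrite ?scale_addmxE.
- by rewrite e1 e1'; ring.
- by rewrite e2 e2'; ring.
- move: e3 e3'; case: (parent i) => [j|] /= eq eq'; rewrite ?scale_addmxE.
    by rewrite eq eq'; ring.
  by rewrite /v0_of in eq eq'; rewrite eq eq'; ring.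
Qed.

Lemma distflow_linear0 : distflow_linear 0 0.
Proof.
move=> i; rewrite /p_of /q_of /P_of /Q_of /l_of /v_of /v0_of !linear0.
rewrite !big1 => [|k _|k _]; rewrite ?mxE ?mulr0 ?subr0 //.
split; rewrite ?addr0 //.
by case: (parent i) => [j|] /=; rewrite ?mxE; ring.
Qed.

Definition branch_proj : 'M[R]_(n + (n + (n + 1)), n + n + (n + (n + (n + (n + 1))))) :=
  row_mx 0 (block_mx 1%:M 0 0 (block_mx 1%:M 0 0 (block_mx 1%:M 0 0 (row_mx 0 1%:M)))).

Lemma branch_layoutK (y : 'cV[R]_(n + (n + (n + (n + 1))))) :
  col_mx (P_of y) (col_mx (Q_of y) (col_mx (l_of y)
    (col_mx (v_of y) (dsubmx (dsubmx (dsubmx (dsubmx y))))))) = y.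
Proof. by rewrite /P_of /Q_of /l_of /v_of !vsubmxK. Qed.

Lemma branch_projE u y :
  branch_proj *m col_mx u y
  = col_mx (P_of y) (col_mx (Q_of y) (col_mx (l_of y) (dsubmx (dsubmx (dsubmx (dsubmx y)))))).
Proof.
rewrite -{1}(branch_layoutK y) mul_row_col !mul_block_col mul_row_col.
by rewrite !mul1mx !mul0mx !addr0 !add0r.
Qed.

Lemma distflow_proj_inj u y : is_tree parent ->
  distflow_linear u y -> branch_proj *m col_mx u y = 0 -> col_mx u y = 0.
Proof.
move=> tree lin /eqP; rewrite branch_projE !col_mx_eq0.
case/and4P=> /eqP P0 /eqP Q0 /eqP l0 /eqP v0_0.
have v00 : v0_of y = 0 by rewrite /v0_of v0_0 mxE.
have zero_children (w : 'I_n -> R) (F : 'cV[R]_n) i :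
    F = 0 -> \sum_(k | parent k == Some i) (F k 0 - w k * l_of y k 0) = 0.
  by move=> ->; rewrite big1 // => k _; rewrite l0 !mxE mulr0 subr0.
have p0 : p_of u = 0.
  apply/matrixP => i j; rewrite (ord1 j); have [+ _ _] := lin i.
  by rewrite zero_children // P0 !mxE addr0.
have q0 : q_of u = 0.
  apply/matrixP => i j; rewrite (ord1 j); have [_ + _] := lin i.
  by rewrite zero_children // Q0 !mxE addr0.
have v_0 : v_of y = 0.
  apply/matrixP => i j; rewrite (ord1 j) [RHS]mxE.
  apply: (is_tree_const (fun i => v_of y i 0) _ tree) => {}i.
  have [_ _] := lin i; rewrite P0 Q0 l0 v00 !mxE => ->; ring.
rewrite -(branch_layoutK y) -[u]vsubmxK -/(p_of u) -/(q_of u).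
by rewrite p0 q0 P0 Q0 l0 v_0 v0_0 !col_mx0.
Qed.

End DistFlow.

Lemma col_data_matrix (R : realType) n T (ud : 'I_T -> 'cV[R]_(n + n))
    (yd : 'I_T -> 'cV[R]_(n + (n + (n + (n + 1))))) t :
  col t (data_matrix ud yd) = col_mx (ud t) (yd t).
Proof. by apply/matrixP => i j; rewrite !mxE (ord1 j). Qed.

Theorem lemma2 (R : realType) (n : nat) (parent : 'I_n -> option 'I_n)
  (r x : 'I_n -> R)
  (Htree : is_tree parent)
  (Hr : forall i, 0 <= r i) (Hx : forall i, 0 <= x i)
  (Hrx : forall i, r i ^+ 2 + x i ^+ 2 != 0)
  (T : nat) (HT : (1 < T)%N)
  (ud : 'I_T -> 'cV[R]_(n + n)) (yd : 'I_T -> 'cV[R]_(n + (n + (n + (n + 1)))))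
  (Hdata : forall t, in_BDF parent r x (ud t) (yd t))
  (Hrank : \rank (data_matrix ud yd) = (3 * n + 1)%N)
  (u : 'cV[R]_(n + n)) (y : 'cV[R]_(n + (n + (n + (n + 1))))) :
  in_BDF parent r x u y <->
  exists g : 'cV[R]_T,
    col_mx u y = data_matrix ud yd *m g /\
    hadamard (v_of y) (l_of y) = hadamard (P_of y) (P_of y) + hadamard (Q_of y) (Q_of y).
Proof.
set H := data_matrix ud yd.
pose S c := distflow_linear parent r x (usubmx c) (dsubmx c).
have S0 : S 0 by rewrite /S !linear0; apply: distflow_linear0.
have S_lin a c d : S c -> S d -> S (a *: c + d).
  by rewrite /S !linearP; apply: distflow_linearD.
have proj_inj c : S c -> branch_proj *m c = 0 -> c = 0.
  by move=> Sc; rewrite -[c]vsubmxK; apply: distflow_proj_inj.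
have S_col t : S (col t H).
  by rewrite /S col_data_matrix col_mxKu col_mxKd; case/in_BDFE: (Hdata t).
have rkH : \rank H = (n + (n + (n + 1)))%N by rewrite Hrank; lia.
rewrite (in_BDFE parent r x); split=> [[lin had] | [g [ug had]]].
  have Suy : S (col_mx u y) by rewrite /S col_mxKu col_mxKd.
  by have [g ->] := S_in_colspace S0 S_lin proj_inj S_col rkH _ Suy; exists g.
split=> //; have := S_mulmx S0 S_lin S_col g.
by rewrite -ug /S col_mxKu col_mxKd.
Qed.
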